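(* Let $G$ be a second countable locally compact Hausdorff groupoid with a fixed left Haar system $\lambda=\{\lambda^u\}_{u\in G^0}$, and let $(\Phi,\Psi)$ be a complementary pair of $N$-functions with $\Phi\in\Delta_2$. For $f\in C_c(G)$, the function $g:G^0\to\mathbb R$, $g(u)=\|f^u\|^0_\Phi$, where $f^u=f|_{G^u}$, is continuous on $G^0$ with compact support.
   Context: $G^0$ is the unit space, $r(x)=xx^{-1}$, $G^u=r^{-1}(u)$. The left Haar system consists of positive Radon measures $\lambda^u$ with support $G^u$ such that $u\mapsto\int f\,d\lambda^u$ is continuous for every $f\in C_c(G)$ and $\int f(xy)d\lambda^{d(x)}(y)=\int f(y)d\lambda^{r(x)}(y)$, where $d(x)=x^{-1}x$. An $N$-function is a continuous even convex $\Phi:\mathbb R\to[0,\infty)$ with $\Phi(x)=0$ iff $x=0$, $\Phi(x)/x\to0$ as $x\to0$, $\Phi(x)/x\to\infty$ as $x\to\infty$; complementary function $\Psi(y)=\sup_{x\ge0}(x|y|-\Phi(x))$. $\Phi\in\Delta_2$: there is $k>0$ with $\Phi(2x)\le k\Phi(x)$ for all $x\ge0$ ($G$ non-compact), resp. for all $x\ge x_0$ for some $x_0>0$ ($G$ compact). For a measurable $h$ on $G^u$, the gauge norm is $\|h\|^0_\Phi=\inf\{k>0:\int_{G^u}\Phi(|h|/k)d\lambda^u\le1\}$. *)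

From HB Require Import structures.
From mathcomp Require Import all_boot all_order all_algebra.
From mathcomp Require Import all_classical all_reals all_analysis.
Set Implicit Arguments. Unset Strict Implicit. Unset Printing Implicit Defensive.
Import Order.TTheory GRing.Theory Num.Theory.
Local Open Scope classical_set_scope.
Local Open Scope ring_scope.

Notation borelT T := (g_sigma_algebraType (@open T)).

(* Topological groupoid (Renault's axioms) on the carrier T, with composable
   pairs [comp], multiplication [mul] (meaningful on [comp]) and inverse [inv]. *)
Definition is_topological_groupoid (T : ptopologicalType) (comp : set (T * T))
    (mul : T -> T -> T) (inv : T -> T) : Prop :=
  (forall x y z, comp (x, y) -> comp (y, z) ->
         [/\ comp (mul x y, z), comp (x, mul y z) &
             mul (mul x y) z = mul x (mul y z)]) /\
  (forall x, inv (inv x) = x) /\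
  (forall x, comp (inv x, x)) /\
  (forall x z, comp (z, x) -> mul (mul z x) (inv x) = z) /\
  (forall x y, comp (x, y) -> mul (inv x) (mul x y) = y) /\
  continuous inv /\
  {within comp, continuous (fun p : T * T => mul p.1 p.2)}.

Definition grp_r {T} (mul : T -> T -> T) (inv : T -> T) (x : T) := mul x (inv x).
Definition grp_d {T} (mul : T -> T -> T) (inv : T -> T) (x : T) := mul (inv x) x.
Definition unit_space {T} (mul : T -> T -> T) (inv : T -> T) : set T :=
  range (grp_r mul inv).
Definition range_fiber {T} (mul : T -> T -> T) (inv : T -> T) (u : T) : set T :=
  grp_r mul inv @^-1` [set u].

Definition Cc {T : ptopologicalType} {V : topologicalType} (zero : V) (f : T -> V) :=
  continuous f /\ compact (closure [set x | f x <> zero]).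

Definition measure_support {R : realType} {T : ptopologicalType}
    (mu : set (borelT T) -> \bar R) : set T :=
  [set x | forall U : set T, open U -> U x -> (0 < mu U)%E].

Definition radon {R : realType} {T : ptopologicalType}
    (mu : set (borelT T) -> \bar R) : Prop :=
  [/\ (forall K : set T, compact K -> (mu K < +oo)%E),
      (forall A : set (borelT T), measurable A ->
         mu A = ereal_inf [set mu U | U in [set U : set T | open U /\ A `<=` U]]) &
      (forall U : set T, open U ->
         mu U = ereal_sup [set mu K | K in [set K : set T | compact K /\ K `<=` U]])].

Definition left_Haar_system {R : realType} {T : ptopologicalType}
    (mul : T -> T -> T) (inv : T -> T)
    (lam : T -> {measure set (borelT T) -> \bar R}) : Prop :=
  [/\ (forall u, unit_space mul inv u ->
         radon (lam u) /\ measure_support (lam u) = range_fiber mul inv u),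
      (forall f : T -> R, Cc 0 f ->
         {within unit_space mul inv,
           continuous ((fun u => fine (\int[lam u]_y (f y)%:E)) : T -> R^o)}) &
      (forall (f : T -> R) (x : T), Cc 0 f ->
         (\int[lam (grp_d mul inv x)]_(y in range_fiber mul inv (grp_d mul inv x))
            (f (mul x y))%:E
         = \int[lam (grp_r mul inv x)]_(y in range_fiber mul inv (grp_r mul inv x))
            (f y)%:E)%E)].

Definition N_function {R : realType} (Phi : R -> R) : Prop :=
  continuous (Phi : R^o -> R^o) /\
  (forall x, Phi (- x) = Phi x) /\
  (forall x y (t : R), 0 <= t <= 1 ->
     Phi (t * x + (1 - t) * y) <= t * Phi x + (1 - t) * Phi y) /\
  (forall x, 0 <= Phi x) /\
  (forall x, Phi x = 0 <-> x = 0) /\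
  (Phi x / x @[x --> 0^'] --> 0) /\
  (Phi x / x @[x --> +oo] --> +oo).

Definition complementary {R : realType} (Phi Psi : R -> R) : Prop :=
  forall y, Psi y = sup [set x * `|y| - Phi x | x in [set x : R | 0 <= x]].

Definition Delta2 {R : realType} (Gcompact : Prop) (Phi : R -> R) : Prop :=
  (~ Gcompact -> exists k : R, 0 < k /\ forall x, 0 <= x -> Phi (2 * x) <= k * Phi x) /\
  (Gcompact -> exists k x0 : R, [/\ 0 < k, 0 < x0 &
                  forall x, x0 <= x -> Phi (2 * x) <= k * Phi x]).

Definition gauge_norm {R : realType} {T : ptopologicalType}
    (Phi : R -> R) (mu : set (borelT T) -> \bar R) (A : set T) (h : T -> R) : R :=
  inf [set k : R | 0 < k /\ (\int[mu]_(y in A) (Phi (h y / k))%:E <= 1)%E].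

From HB Require Import structures.
From mathcomp Require Import all_boot all_order all_algebra.
From mathcomp Require Import all_classical all_reals all_analysis.
From mathcomp Require Import lra ring measurable_realfun.
Set Implicit Arguments.
Unset Strict Implicit.
Unset Printing Implicit Defensive.
Import Order.TTheory GRing.Theory Num.Theory.
Import numFieldNormedType.Exports.
Local Open Scope classical_set_scope.
Local Open Scope ring_scope.

(* For a fixed scale k > 0 the modular M u k = int Phi(|f|/k) d(lam u) is
   continuous in u: Phi(|f|/k) is again in C_c(G), and integrating over G^u is
   the same as integrating over G, because G^u is the support of lam u and, G
   being second countable, the complement of a support is a null set.
   Convexity of Phi and Phi 0 = 0 give M u k' <= (k / k') M u k for k <= k',
   so the modular decreases at a controlled rate in k; together with the
   continuity in u this makes inf {k > 0 | M u k <= 1} both upper and lower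
   semicontinuous.  Finally the norm vanishes unless G^u meets the support of
   f, i.e. outside the compact set r(supp f). *)

Lemma continuous_measurable_fun_borel (R : realType) (T : ptopologicalType)
    (h : T -> R) :
  continuous h -> measurable_fun [set: borelT T] h.
Proof.
move=> ch; apply: (measurability _ (measurable_realfun.RGenOpens.measurableE R)).
move=> _ [_ [a [b ->]] <-]; apply: measurableI => //.
apply: sub_sigma_algebra.
by move/continuousP: ch; apply; exact: interval_open.
Qed.

Lemma negligible_bigcup_countable d (T : sigmaRingType d) (R : realFieldType)
    (mu : {measure set T -> \bar R}) (D : set (set T)) :
  countable D -> (forall A, D A -> mu.-negligible A) ->
  mu.-negligible (\bigcup_(A in D) A).
Proof.
move=> /pcard_surjP[g Dg] DN.
pose F n := if pselect (D (g n)) is left _ then g n else set0.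
apply: (@negligibleS _ _ _ _ (\bigcup_n F n)).
  move=> x [A DA Ax]; have [n _ gnA] := Dg _ DA.
  by exists n => //; rewrite /F; case: pselect; rewrite gnA.
apply: negligible_bigcup => n; rewrite /F; case: pselect => [/DN //|_].
exact: negligible_set0.
Qed.

Section measure_support.
Context (R : realType) (T : ptopologicalType)
  (mu : {measure set (borelT T) -> \bar R}).

Lemma not_measure_supportP x :
  ~ measure_support mu x <-> exists U : set T, [/\ open U, U x & mu U = 0%E].
Proof.
split=> [nSx|[U [oU Ux muU0]] Sx]; last by have := Sx U oU Ux; rewrite muU0 ltxx.
apply: contrapT => noU; apply: nSx => U oU Ux.
rewrite lt0e measure_ge0 andbT; apply/negP => /eqP muU0.
by apply: noU; exists U.
Qed.

Lemma measure_supportCE :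
  ~` measure_support mu = \bigcup_(U in [set U : set T | open U /\ mu U = 0%E]) U.
Proof.
apply/seteqP; split=> [x /not_measure_supportP[U [oU Ux muU0]]|x [U [oU muU0] Ux]].
  by exists U.
by apply/not_measure_supportP; exists U.
Qed.

Lemma open_measure_supportC : open (~` measure_support mu).
Proof. by rewrite measure_supportCE; apply: bigcup_open => U []. Qed.

Lemma measurable_measure_support :
  measurable (measure_support mu : set (borelT T)).
Proof.
rewrite -[measure_support mu]setCK; apply: measurableC.
exact: sub_sigma_algebra open_measure_supportC.
Qed.

Lemma measure_supportC0 :
  @second_countable T -> mu (~` measure_support mu) = 0%E.
Proof.
move=> [B cB [Bo Bx]].
have mO (U : set T) : open U -> measurable (U : set (borelT T)).
  exact: sub_sigma_algebra.
apply/negligibleP; first exact: measurableC measurable_measure_support.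
apply: (@negligibleS _ _ _ _
  (\bigcup_(b in [set b | B b /\ mu b = 0%E]) b : set (borelT T))).
  move=> x /not_measure_supportP[U [oU Ux muU0]].
  have [b [Bb bx] bU] := Bx x U (open_nbhs_nbhs (conj oU Ux)).
  exists b => //; split => //.
  exact: subset_measure0 (mO _ (Bo _ Bb)) (mO _ oU) bU muU0.
apply: (@negligible_bigcup_countable _ (borelT T)).
  apply: sub_countable cB; apply: subset_card_le => b [Bb _]; exact Bb.
by move=> b [Bb mub0]; apply/negligibleP => //; apply: mO; exact (Bo _ Bb).
Qed.

Lemma integral_measure_support (h : T -> R) :
  @second_countable T -> measurable_fun [set: borelT T] h ->
  (forall y, 0 <= h y) ->
  (\int[mu]_(y in measure_support mu) (h y)%:E = \int[mu]_y (h y)%:E)%E.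
Proof.
move=> scT mh h0.
rewrite [RHS](ge0_negligible_integral _ _ _ _ (measure_supportC0 scT)) //.
- by rewrite setTD setCK.
- exact: measurableC measurable_measure_support.
- exact/measurable_EFinP.
- by move=> y _; rewrite lee_fin.
Qed.

End measure_support.

Section luxemburg_inf.
Context (R : realType) (T : topologicalType) (A : set T) (F : T -> R -> R).
Hypothesis F_ge0 : forall u k, A u -> 0 < k -> 0 <= F u k.
Hypothesis F_le_scale :
  forall u k k', A u -> 0 < k -> k <= k' -> F u k' <= k / k' * F u k.
Hypothesis F_continuous :
  forall k, 0 < k -> {within A, continuous (F^~ k : T -> R^o)}.

Let level u := [set k : R | 0 < k /\ F u k <= 1].
Let lux u := inf (level u).

Let has_lbound_level u : has_lbound (level u).
Proof. by exists 0 => k [/ltW]. Qed.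

Lemma luxemburg_nonincreasing u k k' : A u -> 0 < k -> k <= k' -> F u k' <= F u k.
Proof.
move=> Au k0 kk'; apply: le_trans (F_le_scale Au k0 kk') _.
apply: ler_piMl; first exact: F_ge0.
by rewrite ler_pdivrMr ?mul1r // (lt_le_trans k0 kk').
Qed.

Lemma luxemburg_level_neq0 u : A u -> level u !=set0.
Proof.
move=> Au; have F1 := F_ge0 Au ltr01.
have k0 : 0 < 1 + F u 1 by rewrite ltr_pwDl.
exists (1 + F u 1); split => //.
apply: le_trans (F_le_scale Au ltr01 _) _; first by rewrite lerDl.
by rewrite mul1r mulrC ler_pdivrMr // mul1r lerDr.
Qed.

Lemma luxemburg_ge0 u : A u -> 0 <= lux u.
Proof.
by move=> Au; apply: lb_le_inf; [exact: luxemburg_level_neq0 | move=> k [/ltW]].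
Qed.

Lemma near_luxemburg_lt u0 e : A u0 -> 0 < e ->
  \forall u \near within A (nbhs u0), lux u < lux u0 + e.
Proof.
move=> Au0 e0.
have [k1 [k10 Fk1] k1lt] : exists2 k1, level u0 k1 & k1 < lux u0 + e / 2.
  by apply: inf_lt; [exact: luxemburg_level_neq0 | rewrite ltrDl divr_gt0].
set k := lux u0 + e / 2 in k1lt *.
have k0 : 0 < k by rewrite ltr_pwDr ?divr_gt0 ?luxemburg_ge0.
have Fk : F u0 k < 1.
  apply: le_lt_trans (F_le_scale Au0 k10 (ltW k1lt)) _.
  apply: (@le_lt_trans _ _ (k1 / k * 1)).
    by rewrite ler_wpM2l // divr_ge0 // ltW.
  by rewrite mulr1 ltr_pdivrMr // mul1r.
have := (subspace_continuousP _ _).1 (F_continuous k0) u0 Au0.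
move/cvgrPdist_lt/(_ (1 - F u0 k)); rewrite subr_gt0 => /(_ Fk).
apply: filterS2 (withinT _ _) => u Au.
rewrite /from_subspace /= ltr_norml => /andP[Fuk _].
have /(ge_inf (has_lbound_level u)) luk : level u k by split => //; lra.
by apply: le_lt_trans luk _; rewrite ltrD2l ltr_pdivrMr // ltr_pMr // ltr1n.
Qed.

Lemma near_luxemburg_gt u0 e : A u0 -> 0 < e ->
  \forall u \near within A (nbhs u0), lux u0 - e < lux u.
Proof.
move=> Au0 e0.
have [neg|pos] := ltP (lux u0 - e) 0.
  apply: filterS (withinT _ _) => u Au.
  exact: lt_le_trans neg (luxemburg_ge0 Au).
set k := lux u0 - e / 2.
have k0 : 0 < k by rewrite /k; lra.
have Fk : 1 < F u0 k.
  rewrite ltNge; apply/negP => Fle.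
  have /(ge_inf (has_lbound_level u0)) : level u0 k by [].
  rewrite /k; lra.
have := (subspace_continuousP _ _).1 (F_continuous k0) u0 Au0.
move/cvgrPdist_lt/(_ (F u0 k - 1)); rewrite subr_gt0 => /(_ Fk).
apply: filterS2 (withinT _ _) => u Au.
rewrite /from_subspace /= ltr_norml => /andP[_ Fuk].
have : k <= lux u.
  apply: lb_le_inf; first exact: luxemburg_level_neq0.
  move=> k' [k'0 Fk']; rewrite leNgt; apply/negP => k'k.
  have := luxemburg_nonincreasing Au k'0 (ltW k'k); lra.
rewrite /k; lra.
Qed.

Lemma continuous_luxemburg_inf : {within A, continuous (lux : T -> R^o)}.
Proof.
apply/subspace_continuousP => u0 Au0; apply/cvgrPdist_lt => e e0.
apply: filterS2 (near_luxemburg_lt Au0 e0) (near_luxemburg_gt Au0 e0) => u.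
by rewrite ltr_norml => lt gt; apply/andP; split; lra.
Qed.

End luxemburg_inf.

Section N_function_theory.
Context (R : realType) (Phi : R -> R).
Hypothesis NPhi : N_function Phi.

Lemma N_function_ge0 x : 0 <= Phi x.
Proof. by case: NPhi => _ [_ [_ [+ _]]]. Qed.

Lemma N_function0 : Phi 0 = 0.
Proof. by case: NPhi => _ [_ [_ [_ [Phi0 _]]]]; apply/Phi0. Qed.

Lemma N_function_scale t x : 0 <= t <= 1 -> Phi (t * x) <= t * Phi x.
Proof.
move=> t01; have := NPhi.2.2.1 x 0 t t01.
by rewrite mulr0 addr0 N_function0 mulr0 addr0.
Qed.

Lemma continuous_N_function_div (T : topologicalType) (a : T -> R) (k : R) :
  continuous a -> continuous (fun y => Phi (a y / k)).
Proof.
move=> ca y; apply: (@continuous_comp _ _ _ (fun y => a y / k) Phi); last exact: NPhi.1.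
by apply: (@continuous_comp _ _ _ a (fun r => r / k)); [exact: ca | exact: mulrr_continuous].
Qed.

Lemma measurable_N_function_div d (T : measurableType d) (a : T -> R) (k : R) :
  measurable_fun [set: T] a -> measurable_fun [set: T] (fun y => Phi (a y / k)).
Proof.
move=> ma; apply: measurableT_comp; first exact: continuous_measurable_fun NPhi.1.
exact: measurable_funM.
Qed.

Lemma integral_N_function_div_le d (T : measurableType d)
    (mu : {measure set T -> \bar R}) (a : T -> R) (k k' : R) :
  measurable_fun [set: T] a -> 0 < k -> k <= k' ->
  (\int[mu]_y (Phi (a y / k'))%:E <= (k / k')%:E * \int[mu]_y (Phi (a y / k))%:E)%E.
Proof.
move=> ma k0 kk'; have k'0 : 0 < k' := lt_le_trans k0 kk'.
have mPhi c : measurable_fun [set: T] (fun y => (Phi (a y / c))%:E).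
  exact/measurable_EFinP/measurable_N_function_div.
rewrite -ge0_integralZl //; last 2 first.
- by move=> y _; rewrite lee_fin N_function_ge0.
- by rewrite lee_fin divr_ge0 // ltW.
apply: ge0_le_integral => //.
- by move=> y _; rewrite lee_fin N_function_ge0.
- exact: measurable_funeM.
move=> y _; rewrite -EFinM lee_fin.
have -> : a y / k' = k / k' * (a y / k) by field; rewrite !gt_eqF.
apply: N_function_scale.
by rewrite divr_ge0 ?(ltW k0) ?(ltW k'0) //= ler_pdivrMr // mul1r.
Qed.

End N_function_theory.

Lemma integral_lt_pinfty_compact_support (R : realType) (T : ptopologicalType)
    (mu : {measure set (borelT T) -> \bar R}) (h : T -> R) (K : set T) :
  hausdorff_space T -> continuous h -> (forall y, 0 <= h y) ->
  compact K -> (forall y, ~ K y -> h y = 0) -> (mu K < +oo)%E ->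
  (\int[mu]_y (h y)%:E < +oo)%E.
Proof.
move=> hT ch h0 cK hK muK.
have mK : measurable (K : set (borelT T)).
  rewrite -[K]setCK; apply: measurableC; apply: sub_sigma_algebra.
  by apply: closed_openC; exact: compact_closed.
have mh : measurable_fun (K : set (borelT T)) (fun y => (h y)%:E).
  apply: measurable_funS (subsetT _) _ => //.
  by apply/measurable_EFinP; exact: continuous_measurable_fun_borel.
have [M [_ HM]] := compact_bounded (continuous_compact (continuous_subspaceT ch) cK).
have hM y : K y -> h y <= `|M| + 1.
  move=> Ky; apply: le_trans (ler_norm _) _.
  apply: HM (ex_intro2 _ _ y Ky erefl); rewrite ltr_pwDr //.
  exact: ler_norm.
have -> : (\int[mu]_y (h y)%:E = \int[mu]_(y in K) (h y)%:E)%E.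
  rewrite [RHS]integral_mkcond; apply: eq_integral => y _.
  by rewrite /patch; case: ifPn => // /negP; rewrite inE => /hK ->.
apply: (@le_lt_trans _ _ (\int[mu]_(y in K) (cst (`|M| + 1)%:E) y)%E).
  by apply: ge0_le_integral => // y Ky; rewrite lee_fin ?hM.
by rewrite integral_cst // lte_mul_pinfty // lee_fin addr_ge0.
Qed.

Lemma grp_r_continuous (T : ptopologicalType) (comp : set (T * T))
    (mul : T -> T -> T) (inv : T -> T) :
  is_topological_groupoid comp mul inv -> continuous (grp_r mul inv).
Proof.
move=> [_ [invK [compV [_ [_ [cinv cmul]]]]]] x.
have compV' y : comp (y, inv y) by have := compV (inv y); rewrite invK.
have to_comp : (fun y => (y, inv y)) @ nbhs x --> within comp (nbhs (x, inv x)).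
  move=> W /= HW; have xinvx : (y, inv y) @[y --> x] --> (x, inv x).
    by apply: cvg_pair; [exact: cvg_id | exact: cinv].
  change (nbhs x [set y | W (y, inv y)]).
  have : nbhs x [set y | comp (y, inv y) -> W (y, inv y)] := xinvx _ HW.
  by apply: filterS => y /=; apply; exact: compV'.
exact: cvg_comp to_comp ((subspace_continuousP _ _).1 cmul (x, inv x) (compV' x)).
Qed.

Section gauge_norm_Cc.
Context (R : realType) (T : ptopologicalType) (mul : T -> T -> T) (inv : T -> T)
  (lam : T -> {measure set (borelT T) -> \bar R}) (Phi : R -> R)
  (V : normedModType R) (f : T -> V).
Hypotheses (hT : hausdorff_space T) (scT : @second_countable T)
  (lamH : left_Haar_system mul inv lam) (NPhi : N_function Phi) (Ccf : Cc 0 f).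

Let G0 := unit_space mul inv.
Let K := closure [set x | f x <> 0].
Let modular u k := (\int[lam u]_y (Phi (`|f y| / k))%:E)%E.
Let g u := gauge_norm Phi (lam u) (range_fiber mul inv u) (fun x => `|f x|).

Let normf_eq0 y : ~ K y -> `|f y| = 0.
Proof.
by move=> Ky; apply/normr0P/eqP; apply: contra_notP Ky; exact: subset_closure.
Qed.

Let continuous_normf : continuous (fun y => `|f y|).
Proof.
by move=> y; apply: continuous_comp; [exact: Ccf.1 | exact: norm_continuous].
Qed.

Let measurable_normf : measurable_fun [set: borelT T] (fun y => `|f y|).
Proof. exact: continuous_measurable_fun_borel continuous_normf. Qed.

Lemma Cc_N_function_normf k : Cc 0 (fun y => Phi (`|f y| / k)).
Proof.
split; first exact: continuous_N_function_div continuous_normf.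
apply: (subclosed_compact _ Ccf.2); first exact: closed_closure.
apply: closureS => y Phiy fy0; apply: Phiy.
by rewrite fy0 normr0 mul0r N_function0.
Qed.

Lemma modular_lt_pinfty u k : G0 u -> (modular u k < +oo)%E.
Proof.
move=> Gu; have [/(_ u Gu)[[muK _ _] _] _ _] := lamH.
apply: (integral_lt_pinfty_compact_support hT _ _ Ccf.2) => //.
- exact: (Cc_N_function_normf k).1.
- by move=> y; exact: N_function_ge0.
- by move=> y /normf_eq0 ->; rewrite mul0r N_function0.
- exact: muK Ccf.2.
Qed.

Lemma fin_num_modular u k : G0 u -> modular u k \is a fin_num.
Proof.
move=> Gu; rewrite ge0_fin_numE ?modular_lt_pinfty //.
by apply: integral_ge0 => y _; rewrite lee_fin N_function_ge0.
Qed.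

Lemma modular_fiberE u k : G0 u ->
  (\int[lam u]_(y in range_fiber mul inv u) (Phi (`|f y| / k))%:E)%E = modular u k.
Proof.
move=> Gu; have [/(_ u Gu)[_ <-] _ _] := lamH.
apply: integral_measure_support => //; first exact: measurable_N_function_div.
by move=> y; exact: N_function_ge0.
Qed.

Lemma gauge_norm_modular u : G0 u ->
  g u = inf [set k | 0 < k /\ fine (modular u k) <= 1].
Proof.
move=> Gu; rewrite /g /gauge_norm; congr inf; apply: eq_set => k.
by rewrite modular_fiberE // -lee_fin fineK ?fin_num_modular.
Qed.

Lemma continuous_gauge_norm : {within G0, continuous (g : T -> R^o)}.
Proof.
apply: (@subspace_eq_continuous _ _ _
  (fun u => inf [set k | 0 < k /\ fine (modular u k) <= 1])).
  by move=> u /set_mem Gu; rewrite /from_subspace gauge_norm_modular.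
apply: continuous_luxemburg_inf => [u k _ _|u k k' Gu k0 kk'|k k0].
- by apply/fine_ge0/integral_ge0 => y _; rewrite lee_fin N_function_ge0.
- rewrite -lee_fin EFinM !fineK ?fin_num_modular //.
  exact: integral_N_function_div_le.
- by have [_ + _] := lamH; apply; exact: Cc_N_function_normf.
Qed.

Lemma gauge_norm_eq0 u : ~ (grp_r mul inv @` K) u -> g u = 0.
Proof.
move=> NrKu; rewrite /g /gauge_norm.
have -> : [set k | 0 < k /\ (\int[lam u]_(y in range_fiber mul inv u)
              (Phi (`|f y| / k))%:E <= 1)%E] = `]0, +oo[%classic.
  apply/seteqP; split => k /=; rewrite in_itv andbT; first by case.
  move=> k0; split => //; rewrite integral0_eq ?lee01 // => y ruy.
  by rewrite normf_eq0 ?mul0r ?N_function0 // => Ky; apply: NrKu; exists y.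
by rewrite inf_itv.
Qed.

Lemma compact_closure_gauge_norm_neq0 : continuous (grp_r mul inv) ->
  compact (closure (G0 `&` [set u | g u <> 0])).
Proof.
move=> rc; have crK : compact (grp_r mul inv @` K).
  exact: continuous_compact (continuous_subspaceT rc) Ccf.2.
apply: (subclosed_compact _ crK); first exact: closed_closure.
rewrite [X in _ `<=` X](closure_id _).1; last exact: compact_closed.
apply: closureS => u [_ gu]; apply: contra_notP gu; exact: gauge_norm_eq0.
Qed.

End gauge_norm_Cc.

Theorem theorem3p1 (R : realType) (T : ptopologicalType)
    (comp : set (T * T)) (mul : T -> T -> T) (inv : T -> T)
    (lam : T -> {measure set (borelT T) -> \bar R})
    (Phi Psi : R -> R) (V : normedModType R) (f : T -> V) :
  is_topological_groupoid comp mul inv ->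
  hausdorff_space T -> locally_compact [set: T] -> @second_countable T ->
  left_Haar_system mul inv lam ->
  N_function Phi -> N_function Psi -> complementary Phi Psi ->
  Delta2 (compact [set: T]) Phi ->
  Cc 0 f ->
  let g : T -> R^o := fun u => gauge_norm Phi (lam u) (range_fiber mul inv u)
                                 (fun x => `|f x|) in
  {within unit_space mul inv, continuous g} /\
  compact (closure (unit_space mul inv `&` [set u | g u <> 0])).
Proof.
move=> TG hT _ scT lamH NPhi _ _ _ Ccf g; split.
  exact: continuous_gauge_norm.
exact: compact_closure_gauge_norm_neq0 (grp_r_continuous TG).
Qed.
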